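(* Let $G$ be a game all of whose options are numbers, with $L(G)\neq\emptyset$ and $R(G)\neq\emptyset$. Then there are numbers $a,b$ in canonical form such that $G\triangleq\{a\mid b\}$.
   Context: Games are short normal-play combinatorial games, written $G\cong\{L(G)\mid R(G)\}$. A number is a game $G$ with $G^L<G<G^R$ for all $G^L\in L(G)$, $G^R\in R(G)$; every game has a unique simplest representative of its value, its canonical form. Disjunctive sum and negation are the usual ones: $G+H\cong\{L(G)+H,G+L(H)\mid R(G)+H,G+R(H)\}$, $-G\cong\{-R(G)\mid-L(G)\}$. Equivalence modulo domination: $G\triangleq H$ means that in $G+(-H)$, for every move by either player as first player in one summand, the other player has a response in the other summand after which the responder wins. *)

From Stdlib Require List.
From mathcomp Require Import all_boot.
Set Implicit Arguments. Unset Strict Implicit. Unset Printing Implicit Defensive.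

Inductive game : Type := Game : seq game -> seq game -> game.

Definition Lopts (G : game) : seq game := let: Game L _ := G in L.
Definition Ropts (G : game) : seq game := let: Game _ R := G in R.

Definition zero : game := Game [::] [::].

Fixpoint neg (G : game) : game :=
  match G with Game L R => Game (map neg R) (map neg L) end.

Fixpoint add (G : game) : game -> game :=
  fix addG (H : game) : game :=
    match G, H with
    | Game GL GR, Game HL HR =>
        Game (map (fun gl => add gl H) GL ++ map addG HL)
             (map (fun gr => add gr H) GR ++ map addG HR)
    end.

(* Normal play outcomes.
   lfirst G : Left, moving first in G, has a winning strategy.
   rfirst G : Right, moving first in G, has a winning strategy. *)
Fixpoint lfirst (G : game) : bool :=
  match G with
  | Game L _ => has (fun gl => match gl with Game _ GLR => all lfirst GLR end) L
  end.

Fixpoint rfirst (G : game) : bool :=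
  match G with
  | Game _ R => has (fun gr => match gr with Game GRL _ => all rfirst GRL end) R
  end.

(* Left wins G moving second (Right starts); Right wins G moving second. *)
Definition lsecond (G : game) : bool := all lfirst (Ropts G).
Definition rsecond (G : game) : bool := all rfirst (Lopts G).

Definition gle (G H : game) : bool := rsecond (add G (neg H)).
Definition glt (G H : game) : bool := gle G H && ~~ gle H G.

Definition is_number (G : game) : bool :=
  all (fun gl => glt gl G) (Lopts G) && all (fun gr => glt G gr) (Ropts G).

Definition no_dominated_left (G : game) : bool :=
  let L := Lopts G in
  [forall i : 'I_(size L), forall j : 'I_(size L),
      (i != j) ==> ~~ gle (nth zero L i) (nth zero L j)].

Definition no_dominated_right (G : game) : bool :=
  let R := Ropts G in
  [forall i : 'I_(size R), forall j : 'I_(size R),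
      (i != j) ==> ~~ gle (nth zero R j) (nth zero R i)].

Definition no_reversible (G : game) : bool :=
  all (fun gl => ~~ has (fun glr => gle glr G) (Ropts gl)) (Lopts G) &&
  all (fun gr => ~~ has (fun grl => gle G grl) (Lopts gr)) (Ropts G).

Fixpoint canonical (G : game) : bool :=
  match G with
  | Game L R =>
      [&& all canonical L, all canonical R,
          no_dominated_left G, no_dominated_right G & no_reversible G]
  end.

(* Equivalence modulo domination G ≜ H: in G + (-H), for every move by either
   player as first player in one summand, the other player has a response in
   the other summand after which the responder wins (the original mover being
   then to move). *)
Definition eqdom (G H : game) : Prop :=
  (forall gl, List.In gl (Lopts G) ->
     exists2 r, List.In r (Ropts (neg H)) & rsecond (add gl r)) /\
  (forall l, List.In l (Lopts (neg H)) ->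
     exists2 gr, List.In gr (Ropts G) & rsecond (add gr l)) /\
  (forall gr, List.In gr (Ropts G) ->
     exists2 l, List.In l (Lopts (neg H)) & lsecond (add gr l)) /\
  (forall r, List.In r (Ropts (neg H)) ->
     exists2 gl, List.In gl (Lopts G) & lsecond (add gl r)).

From Stdlib Require List.
From HB Require Import structures.
From mathcomp Require Import all_boot zify.
Set Implicit Arguments. Unset Strict Implicit. Unset Printing Implicit Defensive.

(* Deleting a dominated option or bypassing a reversible one does not change
   the value of a game and strictly lowers a suitable weight, so every game is
   equal to a canonical one.  Numbers are totally ordered, hence L(G) has a
   largest element m and R(G) a smallest one n; let a and b be canonical games
   equal to m and n.  A canonical game equal to a number is a number, because
   an option of it on the wrong side of its value would be reversible.  Finally
   G^L <= m = a for every G^L and b = n <= G^R for every G^R, while m and n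
   themselves answer the two moves of -{a | b}: this is G ≜ {a | b}. *)

Lemma map_id_In (T : Type) (f : T -> T) s :
  (forall x, List.In x s -> f x = x) -> map f s = s.
Proof.
elim: s => //= y s IHs h; rewrite h ?IHs //; last by left.
by move=> x hx; apply: h; right.
Qed.

Lemma InP (T : eqType) (x : T) s : reflect (List.In x s) (x \in s).
Proof.
elim: s => [|y s IHs] /=; first exact: ReflectF.
rewrite in_cons; apply: (iffP orP) => [[/eqP ->|/IHs]|[->|/IHs]]; by [left|right|rewrite eqxx|].
Qed.

Lemma sumn_map_rem (T : eqType) (f : T -> nat) x s :
  x \in s -> sumn (map f s) = f x + sumn (map f (rem x s)).
Proof. by move=> xs; rewrite (perm_sumn (perm_map f (perm_to_rem xs))). Qed.

Lemma leq_sumn_map (T : eqType) (f : T -> nat) x s : x \in s -> f x <= sumn (map f s).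
Proof. by move=> xs; rewrite (sumn_map_rem f xs) leq_addr. Qed.

Lemma exists_related_seq (T U : eqType) (P : T -> U -> Prop) (s : seq T) :
  {in s, forall x, exists y, P x y} ->
  exists s' : seq U, {in s, forall x, exists2 y, y \in s' & P x y} /\
                     {in s', forall y, exists2 x, x \in s & P x y}.
Proof.
elim: s => [|x s IHs] exP; first by exists [::].
have [|s' [ss' s's]] := IHs; first by move=> z zs; apply: exP; rewrite inE zs orbT.
have [y Pxy] := exP x (mem_head x s).
exists (y :: s'); split => z; rewrite inE => /predU1P[-> | z_in].
- by exists y; rewrite ?mem_head.
- by have [y' ? ?] := ss' z z_in; exists y'; rewrite // inE; apply/predU1P; right.
- by exists x; rewrite ?mem_head.
- by have [x' ? ?] := s's z z_in; exists x'; rewrite // inE; apply/predU1P; right.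
Qed.

Lemma exists_dominated_pair (T : eqType) (x0 : T) (r : rel T) (s : seq T) :
  ~~ [forall i : 'I_(size s), forall j : 'I_(size s),
        (i != j) ==> ~~ r (nth x0 s i) (nth x0 s j)] ->
  exists x s', perm_eq s (x :: s') /\ exists2 y, y \in s' & r x y.
Proof.
case/forallPn => i /forallPn[j]; rewrite negb_imply negbK => /andP[neq_ij r_ij].
exists (nth x0 s i), (take i s ++ drop i.+1 s); split.
  by rewrite -{1}(cat_take_drop i s) (drop_nth x0 (ltn_ord i)) -cat1s perm_catCA.
exists (nth x0 s j) => //; rewrite mem_cat.
have j_lt := ltn_ord j; case: (ltngtP j i) => [lt_ji | lt_ij | /val_inj eq_ji].
- by rewrite -(nth_take x0 lt_ji) mem_nth // size_take_min; lia.
- by rewrite -(subnKC lt_ij) -nth_drop mem_nth ?orbT // size_drop; lia.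
- by rewrite eq_ji eqxx in neq_ij.
Qed.

Lemma exists_min_in (T : eqType) (r : rel T) (s : seq T) :
  transitive r -> {in s &, total r} -> s != [::] ->
  exists2 m, m \in s & {in s, forall x, r m x}.
Proof.
move=> r_trans r_total s_nil; have := sort_sorted_in r_total (allss s).
have mem_s := mem_sort r s; have := size_sort r s.
case: (sort r s) mem_s => [|m t] mem_s /=.
  by move=> /esym/size0nil s0; rewrite s0 in s_nil.
move=> _ path_t; have m_s : m \in s by rewrite -mem_s mem_head.
exists m => // x; rewrite -mem_s inE => /predU1P[-> | x_t].
  by have := r_total m m m_s m_s; rewrite orbb.
exact: (allP (order_path_min r_trans path_t)).
Qed.

Lemma exists_max_in (T : eqType) (r : rel T) (s : seq T) :
  transitive r -> {in s &, total r} -> s != [::] ->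
  exists2 m, m \in s & {in s, forall x, r x m}.
Proof.
move=> r_trans r_total; apply: (@exists_min_in _ (fun x y => r y x)).
- by move=> y x z xy yz; apply: r_trans xy.
- by move=> x y xs ys; rewrite orbC r_total.
Qed.

(* The induction principle generated for the nested type [game] has no
   induction hypotheses for the options. *)
Section GameInd.
Variable P : game -> Prop.
Hypothesis IH : forall L R,
  (forall x, List.In x L -> P x) -> (forall x, List.In x R -> P x) -> P (Game L R).
Fixpoint game_In_ind (g : game) : P g :=
  let fix all_In (s : seq game) : forall x, List.In x s -> P x :=
    match s with
    | [::] => fun x (h : List.In x [::]) => match h with end
    | y :: s' => fun x h => match h with
                 | or_introl e => eq_ind y P (game_In_ind y) x e
                 | or_intror h' => all_In s' x h' end
    end in
  match g with Game L R => IH (all_In L) (all_In R) end.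
End GameInd.

Fixpoint game_to_tree (g : game) : GenTree.tree unit :=
  let: Game L R := g in
  GenTree.Node 0 [:: GenTree.Node 0 (map game_to_tree L);
                     GenTree.Node 0 (map game_to_tree R)].

Fixpoint tree_to_game (t : GenTree.tree unit) : game :=
  if t is GenTree.Node _ [:: GenTree.Node _ l; GenTree.Node _ r]
  then Game (map tree_to_game l) (map tree_to_game r) else zero.

Lemma game_to_treeK : cancel game_to_tree tree_to_game.
Proof. by elim/game_In_ind => L R HL HR /=; rewrite -!map_comp !map_id_In. Qed.

HB.instance Definition _ := Equality.copy game (can_type game_to_treeK).

Lemma game_mem_ind (P : game -> Prop) :
  (forall L R : seq game,
     (forall x, x \in L -> P x) -> (forall x, x \in R -> P x) -> P (Game L R)) ->
  forall g, P g.
Proof.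
move=> IH; elim/game_In_ind => L R HL HR.
by apply: IH => x /InP; [apply: HL | apply: HR].
Qed.

Fixpoint gsize (g : game) : nat :=
  let: Game L R := g in (sumn (map gsize L) + sumn (map gsize R)).+1.

Lemma gsize_Lopt g x : x \in Lopts g -> gsize x < gsize g.
Proof. by case: g => L R /= /(leq_sumn_map gsize) h; rewrite ltnS (leq_trans h) ?leq_addr. Qed.

Lemma gsize_Ropt g x : x \in Ropts g -> gsize x < gsize g.
Proof. by case: g => L R /= /(leq_sumn_map gsize) h; rewrite ltnS (leq_trans h) ?leq_addl. Qed.

Lemma gameE g : g = Game (Lopts g) (Ropts g). Proof. by case: g. Qed.

Lemma Lopts_neg g : Lopts (neg g) = map neg (Ropts g). Proof. by case: g. Qed.
Lemma Ropts_neg g : Ropts (neg g) = map neg (Lopts g). Proof. by case: g. Qed.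

Lemma Lopts_add x y :
  Lopts (add x y) = map (add^~ y) (Lopts x) ++ map (add x) (Lopts y).
Proof. by case: x; case: y. Qed.

Lemma Ropts_add x y :
  Ropts (add x y) = map (add^~ y) (Ropts x) ++ map (add x) (Ropts y).
Proof. by case: x; case: y. Qed.

Lemma negK : involutive neg.
Proof.
elim/game_mem_ind => L R HL HR /=.
by congr Game; rewrite -map_comp -[RHS]map_id; apply/eq_in_map => x; [apply: HL | apply: HR].
Qed.

Lemma neg_add x y : neg (add x y) = add (neg x) (neg y).
Proof.
elim/game_mem_ind: x y => L R HL HR; elim/game_mem_ind => L' R' HL' HR'.
rewrite [LHS]gameE [RHS]gameE Lopts_neg Ropts_neg !Lopts_add !Ropts_add.
rewrite !Lopts_neg !Ropts_neg !map_cat -!map_comp.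
congr (Game (_ ++ _) (_ ++ _)); apply/eq_in_map => t ht.
all: by [apply: HL | apply: HR | apply: HL' | apply: HR'].
Qed.

Lemma lfirstE g : lfirst g = has lsecond (Lopts g).
Proof. by case: g => L R /=; apply: eq_has => -[]. Qed.

Lemma rfirstE g : rfirst g = has rsecond (Ropts g).
Proof. by case: g => L R /=; apply: eq_has => -[]. Qed.

Lemma outcome_duality g : lfirst g = ~~ rsecond g /\ rfirst g = ~~ lsecond g.
Proof.
elim/game_mem_ind: g => L R HL HR.
rewrite lfirstE rfirstE /rsecond /lsecond /= -!has_predC.
by split; apply: eq_in_has => x /= hx; rewrite ?(HL x hx).2 ?(HR x hx).1 negbK.
Qed.

Lemma rsecondE g : rsecond g = all (fun gl => ~~ lsecond gl) (Lopts g).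
Proof. by apply: eq_all => x; rewrite (outcome_duality x).2. Qed.

Lemma lsecondE g : lsecond g = all (fun gr => ~~ rsecond gr) (Ropts g).
Proof. by apply: eq_all => x; rewrite (outcome_duality x).1. Qed.

Lemma neg_outcomes g : rsecond (neg g) = lsecond g /\ lsecond (neg g) = rsecond g.
Proof.
elim/game_mem_ind: g => L R HL HR.
rewrite rsecondE lsecondE [lsecond _]lsecondE [rsecond _]rsecondE.
rewrite Lopts_neg Ropts_neg !all_map.
by split; apply: eq_in_all => x hx /=; rewrite ?(HL x hx).1 ?(HR x hx).2.
Qed.

Lemma add_outcomesC a b :
  rsecond (add a b) = rsecond (add b a) /\ lsecond (add a b) = lsecond (add b a).
Proof.
elim/game_mem_ind: a b => L R HL HR; elim/game_mem_ind => L' R' HL' HR'.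
rewrite !rsecondE !lsecondE !Lopts_add !Ropts_add !all_cat !all_map.
split; rewrite [LHS]andbC; congr andb; apply/eq_in_all => t ht; apply: (congr1 negb).
- exact: (HL' t ht).2.
- exact: (HL t ht _).2.
- exact: (HR' t ht).1.
- exact: (HR t ht _).1.
Qed.

Lemma lsecond_add_neg x y : lsecond (add x (neg y)) = gle y x.
Proof. by rewrite /gle -(neg_outcomes _).1 neg_add negK (add_outcomesC _ _).1. Qed.

Lemma gleE x y : gle x y =
  all (fun xl => ~~ gle y xl) (Lopts x) && all (fun yr => ~~ gle yr x) (Ropts y).
Proof.
rewrite {1}/gle rsecondE Lopts_add all_cat Lopts_neg !all_map.
by congr andb; apply/eq_in_all => t _ /=; rewrite lsecond_add_neg.
Qed.

Lemma gleP x y :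
  reflect ({in Lopts x, forall xl, ~~ gle y xl} /\ {in Ropts y, forall yr, ~~ gle yr x})
          (gle x y).
Proof. by rewrite gleE; apply: (iffP andP) => -[h1 h2]; split; apply/allP. Qed.

Lemma gle_refl : reflexive gle.
Proof.
elim/game_mem_ind => L R HL HR; apply/gleP; split => t ht; apply/negP.
- by case/gleP => /(_ t ht); rewrite HL.
- by case/gleP => _ /(_ t ht); rewrite HR.
Qed.

Lemma ngle_Lopt x xl : xl \in Lopts x -> ~~ gle x xl.
Proof. by have /gleP[h _] := gle_refl x; apply: h. Qed.

Lemma ngle_Ropt x xr : xr \in Ropts x -> ~~ gle xr x.
Proof. by have /gleP[_ h] := gle_refl x; apply: h. Qed.

Lemma gle_trans : transitive gle.
Proof.
suff le_trans n x y z : gsize x + gsize y + gsize z < n -> gle x y -> gle y z -> gle x z.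
  by move=> y x z; apply: le_trans (ltnSn _).
elim: n x y z => // n IH x y z /ltnSE hs hxy hyz.
apply/gleP; split => t ht; apply/negP => h.
- have /gleP[/(_ t ht)/negP[]] := hxy.
  by apply: (IH y z t) => //; have := gsize_Lopt ht; lia.
- have /gleP[_ /(_ t ht)/negP[]] := hyz.
  by apply: (IH t x y) => //; have := gsize_Ropt ht; lia.
Qed.

Lemma gle_of_opts x y :
  {in Lopts x, forall xl, exists2 yl, yl \in Lopts y & gle xl yl} ->
  {in Ropts y, forall yr, exists2 xr, xr \in Ropts x & gle xr yr} -> gle x y.
Proof.
move=> hL hR; apply/gleP; split=> t ht; apply/negP => h.
- have [yl hyl le_t] := hL t ht.
  by move: (ngle_Lopt hyl); rewrite (gle_trans h le_t).
- have [xr hxr le_t] := hR t ht.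
  by move: (ngle_Ropt hxr); rewrite (gle_trans le_t h).
Qed.

Lemma ngle_witness x y : ~~ gle x y ->
  (exists2 xl, xl \in Lopts x & gle y xl) \/ (exists2 yr, yr \in Ropts y & gle yr x).
Proof.
rewrite gleE negb_and => /orP[/allPn[xl ? /negbNE] | /allPn[yr ? /negbNE]].
- by left; exists xl.
- by right; exists yr.
Qed.

Definition gequiv x y := gle x y && gle y x.

Lemma gequiv_refl : reflexive gequiv.
Proof. by move=> x; rewrite /gequiv gle_refl. Qed.

Lemma gequiv_trans : transitive gequiv.
Proof.
move=> y x z /andP[xy yx] /andP[yz zy].
by apply/andP; split; [apply: gle_trans xy yz | apply: gle_trans zy yx].
Qed.

Lemma gequiv_Game L R L' R' :
  {in L, forall x, exists2 y, y \in L' & gequiv x y} ->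
  {in L', forall y, exists2 x, x \in L & gequiv x y} ->
  {in R, forall x, exists2 y, y \in R' & gequiv x y} ->
  {in R', forall y, exists2 x, x \in R & gequiv x y} ->
  gequiv (Game L R) (Game L' R').
Proof.
move=> LL' L'L RR' R'R; apply/andP; split; apply: gle_of_opts => t /=.
- by case/LL' => y ? /andP[le_ty _]; exists y.
- by case/R'R => x ? /andP[le_xt _]; exists x.
- by case/L'L => x ? /andP[_ le_tx]; exists x.
- by case/RR' => y ? /andP[_ le_yt]; exists y.
Qed.

Lemma gequiv_delete_dominated_left x y L L' R :
  perm_eq L (x :: L') -> y \in L' -> gle x y -> gequiv (Game L' R) (Game L R).
Proof.
move=> /perm_mem eqL yL' le_xy; apply/andP; split; apply: gle_of_opts => t /=.
- by move=> tL'; exists t; [rewrite eqL inE tL' orbT | exact: gle_refl].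
- by move=> tR; exists t; last exact: gle_refl.
- rewrite eqL inE => /predU1P[-> | tL']; first by exists y.
  by exists t; last exact: gle_refl.
- by move=> tR; exists t; last exact: gle_refl.
Qed.

Lemma gequiv_delete_dominated_right x y L R R' :
  perm_eq R (x :: R') -> y \in R' -> gle y x -> gequiv (Game L R') (Game L R).
Proof.
move=> /perm_mem eqR yR' le_yx; apply/andP; split; apply: gle_of_opts => t /=.
- by move=> tL; exists t; last exact: gle_refl.
- rewrite eqR inE => /predU1P[-> | tR']; first by exists y.
  by exists t; last exact: gle_refl.
- by move=> tL; exists t; last exact: gle_refl.
- by move=> tR'; exists t; [rewrite eqR inE tR' orbT | exact: gle_refl].
Qed.

Lemma gequiv_bypass_left xl xlr L R :
  xl \in L -> xlr \in Ropts xl -> gle xlr (Game L R) ->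
  gequiv (Game (rem xl L ++ Lopts xlr) R) (Game L R).
Proof.
set G := Game L R; set G' := Game _ R => xlL xlr_xl le_xlr_G.
have eqL := perm_mem (perm_to_rem xlL).
have le_xlr_G' : gle xlr G'.
  apply/gleP; split => u u_in; first by apply: ngle_Lopt; rewrite /= mem_cat u_in orbT.
  apply/negP => le_u; move: (ngle_Ropt (u_in : u \in Ropts G)).
  by rewrite (gle_trans le_u le_xlr_G).
apply/andP; split; apply/gleP; split => t t_in; try exact: ngle_Ropt.
- move: t_in; rewrite /= mem_cat => /orP[/mem_rem t_L | t_xlr]; first exact: ngle_Lopt.
  by apply/negP => le_t; move: (ngle_Lopt t_xlr); rewrite (gle_trans le_xlr_G le_t).
- move: t_in; rewrite /= eqL inE => /predU1P[-> | t_rem].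
  + by apply/negP => /gleP[_ /(_ _ xlr_xl)]; rewrite le_xlr_G'.
  + by apply: ngle_Lopt; rewrite /= mem_cat t_rem.
Qed.

Lemma gequiv_bypass_right xr xrl L R :
  xr \in R -> xrl \in Lopts xr -> gle (Game L R) xrl ->
  gequiv (Game L (rem xr R ++ Ropts xrl)) (Game L R).
Proof.
set G := Game L R; set G' := Game L _ => xrR xrl_xr le_G_xrl.
have eqR := perm_mem (perm_to_rem xrR).
have le_G'_xrl : gle G' xrl.
  apply/gleP; split => u u_in; last by apply: ngle_Ropt; rewrite /= mem_cat u_in orbT.
  apply/negP => le_u; move: (ngle_Lopt (u_in : u \in Lopts G)).
  by rewrite (gle_trans le_G_xrl le_u).
apply/andP; split; apply/gleP; split => t t_in; try exact: ngle_Lopt.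
- move: t_in; rewrite /= eqR inE => /predU1P[-> | t_rem].
  + by apply/negP => /gleP[/(_ _ xrl_xr)]; rewrite le_G'_xrl.
  + by apply: ngle_Ropt; rewrite /= mem_cat t_rem.
- move: t_in; rewrite /= mem_cat => /orP[/mem_rem t_R | t_xrl]; first exact: ngle_Ropt.
  by apply/negP => le_t; move: (ngle_Ropt t_xrl); rewrite (gle_trans le_t le_G_xrl).
Qed.

(* By [rweightE], [rweight g] exceeds the total weight of the options of any
   option of [g]; so bypassing a reversible option lowers [opts_weight]. *)
Fixpoint rweight (g : game) : nat :=
  let: Game L R := g in
  let opts_rweight x :=
    let: Game xL xR := x in sumn (map rweight xL) + sumn (map rweight xR) in
  (sumn (map opts_rweight L) + sumn (map opts_rweight R)).+1.

Definition opts_weight (g : game) :=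
  sumn (map rweight (Lopts g)) + sumn (map rweight (Ropts g)).

Lemma rweightE g :
  rweight g = (sumn (map opts_weight (Lopts g)) + sumn (map opts_weight (Ropts g))).+1.
Proof. by case: g => L R /=; congr (sumn _ + sumn _).+1; apply: eq_map => -[]. Qed.

Lemma rweight_gt0 g : 0 < rweight g. Proof. by case: g. Qed.

Lemma opts_weight_Lopt g x : x \in Lopts g -> opts_weight x < rweight g.
Proof.
by move/(leq_sumn_map opts_weight) => h; rewrite rweightE ltnS (leq_trans h) ?leq_addr.
Qed.

Lemma opts_weight_Ropt g x : x \in Ropts g -> opts_weight x < rweight g.
Proof.
by move/(leq_sumn_map opts_weight) => h; rewrite rweightE ltnS (leq_trans h) ?leq_addl.
Qed.

Lemma canonical_opts g : canonical g -> all canonical (Lopts g) && all canonical (Ropts g).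
Proof. by case: g => L R /= /and5P[-> ->]. Qed.

Lemma canonical_no_reversible c : canonical c -> no_reversible c.
Proof. by case: c => L R /= /and5P[]. Qed.

Definition reduced g :=
  [&& no_dominated_left g, no_dominated_right g & no_reversible g].

Lemma canonical_Game L R :
  canonical (Game L R) = [&& all canonical L, all canonical R & reduced (Game L R)].
Proof. by []. Qed.

Lemma simplify_step L R : all canonical L -> all canonical R -> ~~ reduced (Game L R) ->
  exists2 g, opts_weight g < opts_weight (Game L R) &
    [/\ all canonical (Lopts g), all canonical (Ropts g) & gequiv g (Game L R)].
Proof.
move=> cL cR; rewrite /reduced !negb_and => /or3P[| |].
- case/exists_dominated_pair=> x [L' [eqL [y yL' le_xy]]]; exists (Game L' R).
    have := rweight_gt0 x.
    by rewrite /opts_weight /= (perm_sumn (perm_map rweight eqL)) /=; lia.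
  split=> //; last exact: gequiv_delete_dominated_left eqL yL' le_xy.
  by apply/allP => t tL'; apply: (allP cL); rewrite (perm_mem eqL) inE tL' orbT.
- case/(exists_dominated_pair (r := fun a b => gle b a)) => x [R' [eqR [y yR' le_yx]]].
  exists (Game L R').
    have := rweight_gt0 x.
    by rewrite /opts_weight /= (perm_sumn (perm_map rweight eqR)) /=; lia.
  split=> //; last exact: gequiv_delete_dominated_right eqR yR' le_yx.
  by apply/allP => t tR'; apply: (allP cR); rewrite (perm_mem eqR) inE tR' orbT.
- case/orP => /allPn[x x_in /negbNE/hasP[y y_x rev_y]].
  + exists (Game (rem x L ++ Lopts y) R).
      have := opts_weight_Ropt y_x.
      by rewrite /opts_weight /= map_cat sumn_cat (sumn_map_rem _ x_in) /=; lia.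
    split=> //; last exact: gequiv_bypass_left.
    have /andP[_ /allP/(_ y y_x)/canonical_opts/andP[cy _]] := canonical_opts (allP cL x x_in).
    by rewrite all_cat cy andbT; apply/allP => t /mem_rem; apply: (allP cL).
  + exists (Game L (rem x R ++ Ropts y)).
      have := opts_weight_Lopt y_x.
      by rewrite /opts_weight /= map_cat sumn_cat (sumn_map_rem _ x_in) /=; lia.
    split=> //; last exact: gequiv_bypass_right.
    have /andP[/allP/(_ y y_x)/canonical_opts/andP[_ cy] _] := canonical_opts (allP cR x x_in).
    by rewrite all_cat cy andbT; apply/allP => t /mem_rem; apply: (allP cR).
Qed.

Lemma canonical_of_canonical_opts g :
  all canonical (Lopts g) -> all canonical (Ropts g) -> exists2 c, canonical c & gequiv c g.
Proof.
have [n] := ubnP (opts_weight g); elim: n g => // n IH [L R] /ltnSE le_gn cL cR.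
have [red | /(simplify_step cL cR)[g' lt_g' [cL' cR' eq_g']]] := boolP (reduced (Game L R)).
  by exists (Game L R); [rewrite canonical_Game cL cR | exact: gequiv_refl].
have [|c cc eq_c] := IH g' _ cL' cR'; first exact: leq_trans lt_g' le_gn.
by exists c => //; apply: gequiv_trans eq_c eq_g'.
Qed.

Lemma canonical_exists g : exists2 c, canonical c & gequiv c g.
Proof.
elim/game_mem_ind: g => L R HL HR.
pose P x c := canonical c /\ gequiv c x.
have [L' [LL' L'L]] : exists L' : seq game,
    {in L, forall x, exists2 c, c \in L' & P x c} /\ {in L', forall c, exists2 x, x \in L & P x c}.
  by apply: (@exists_related_seq _ _ P) => x /HL[c]; exists c.
have [R' [RR' R'R]] : exists R' : seq game,
    {in R, forall x, exists2 c, c \in R' & P x c} /\ {in R', forall c, exists2 x, x \in R & P x c}.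
  by apply: (@exists_related_seq _ _ P) => x /HR[c]; exists c.
have [||c cc eq_c] := @canonical_of_canonical_opts (Game L' R').
- by apply/allP => c /L'L[x _ []].
- by apply/allP => c /R'R[x _ []].
exists c => //; apply: gequiv_trans eq_c _.
apply: gequiv_Game => t.
- by case/L'L => x ? [_ ?]; exists x.
- by case/LL' => c' ? [_ ?]; exists c'.
- by case/R'R => x ? [_ ?]; exists x.
- by case/RR' => c' ? [_ ?]; exists c'.
Qed.

Lemma number_Lopt_le x xl : is_number x -> xl \in Lopts x -> gle xl x.
Proof. by case/andP => /allP h _ /h /andP[]. Qed.

Lemma number_Ropt_ge x xr : is_number x -> xr \in Ropts x -> gle x xr.
Proof. by case/andP => _ /allP h /h /andP[]. Qed.

Lemma gle_total_number x y : is_number x -> is_number y -> gle x y || gle y x.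
Proof.
move=> nx ny; apply/orP.
have [|/ngle_witness[[xl xl_x le_y] | [yr yr_y le_x]]] := boolP (gle x y).
- by left.
- by right; apply: gle_trans le_y (number_Lopt_le nx xl_x).
- by right; apply: gle_trans (number_Ropt_ge ny yr_y) le_x.
Qed.

Lemma no_reversible_number c m :
  no_reversible c -> is_number m -> gequiv c m -> is_number c.
Proof.
case/andP => /allP revL /allP revR nm /andP[le_cm le_mc].
apply/andP; split; apply/allP => t t_c; apply/andP; split.
- have /gleP[/(_ t t_c)/ngle_witness[[ml ml_m le_t] | [tr tr_t le_tr]] _] := le_cm.
    exact: gle_trans (gle_trans le_t (number_Lopt_le nm ml_m)) le_mc.
  by move: (revL t t_c) => /hasP[]; exists tr => //; apply: gle_trans le_tr le_mc.
- exact: ngle_Lopt.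
- have /gleP[_ /(_ t t_c)/ngle_witness[[tl tl_t le_tl] | [mr mr_m le_t]]] := le_mc.
    by move: (revR t t_c) => /hasP[]; exists tl => //; apply: gle_trans le_cm le_tl.
  exact: gle_trans le_cm (gle_trans (number_Ropt_ge nm mr_m) le_t).
- exact: ngle_Ropt.
Qed.

Lemma eqdom_single_opts G a b :
  {in Lopts G, forall gl, gle gl a} -> (exists2 gl, gl \in Lopts G & gle a gl) ->
  {in Ropts G, forall gr, gle b gr} -> (exists2 gr, gr \in Ropts G & gle gr b) ->
  eqdom G (Game [:: a] [:: b]).
Proof.
move=> le_a [gl gl_G a_gl] b_le [gr gr_G gr_b]; rewrite /eqdom /=.
split; [|split; [|split]].
- by move=> l /InP l_G; exists (neg a); [left | apply: le_a].
- by move=> _ [<- | []]; exists gr; [apply/InP |].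
- by move=> r /InP r_G; exists (neg b); [left | rewrite lsecond_add_neg; apply: b_le].
- by move=> _ [<- | []]; exists gl; [apply/InP | rewrite lsecond_add_neg].
Qed.

Unset Implicit Arguments.

Theorem proposition2p8 (G : game) :
  (forall g, List.In g (Lopts G) -> is_number g) ->
  (forall g, List.In g (Ropts G) -> is_number g) ->
  Lopts G <> [::] -> Ropts G <> [::] ->
  exists a b : game,
    [/\ is_number a, canonical a, is_number b, canonical b &
        eqdom G (Game [:: a] [:: b])].
Proof.
move=> numL numR /eqP L_nil /eqP R_nil.
have total_in s : (forall g, List.In g s -> is_number g) -> {in s &, total gle}.
  by move=> num_s x y /InP/num_s nx /InP/num_s ny; apply: gle_total_number.
have [m m_L m_max] := exists_max_in gle_trans (total_in _ numL) L_nil.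
have [n n_R n_min] := exists_min_in gle_trans (total_in _ numR) R_nil.
have [a ca eq_am] := canonical_exists m.
have [b cb eq_bn] := canonical_exists n.
have num_a : is_number a.
  by apply: no_reversible_number (canonical_no_reversible ca) _ eq_am; apply/numL/InP.
have num_b : is_number b.
  by apply: no_reversible_number (canonical_no_reversible cb) _ eq_bn; apply/numR/InP.
case/andP: eq_am => le_am le_ma; case/andP: eq_bn => le_bn le_nb.
exists a, b; split=> //; apply: eqdom_single_opts.
- by move=> gl /m_max le_gl; apply: gle_trans le_gl le_ma.
- by exists m.
- by move=> gr /n_min le_gr; apply: gle_trans le_bn le_gr.
- by exists n.
Qed.
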